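(* Let $G$ be a group acting properly by isometries on a metric space $X$ and let $H\le G$. Suppose there exist a map $\phi\colon G\to G$, a constant $\theta\ge0$ and a point $x\in X$ such that (CQ1) for all $u,v\in G$, if $\phi(u)H=\phi(v)H$ then $d(\phi(u)x,\phi(v)x)\le\theta$; and (CQ2) for all $u\in G$, $d(ux,\phi(u)x)\le\theta$. Then $\omega_G=\omega_{G/H}$.
   Context: Proper means $B_G(x,r)=\{g\in G: d(x,gx)\le r\}$ is finite for all $x,r$. For $o\in X$: $\omega_G=\limsup_{r\to\infty}\frac1r\log|B_G(o,r)|$ and $\omega_{G/H}=\limsup_{r\to\infty}\frac1r\log|\mathcal L(B_G(o,r))|$, where $\mathcal L\colon G\to G/H$ is the natural map to left cosets; these do not depend on $o$. *)

From HB Require Import structures.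
From mathcomp Require Import all_boot all_order all_algebra.
From mathcomp Require Import all_classical all_reals all_analysis.
Set Implicit Arguments. Unset Strict Implicit. Unset Printing Implicit Defensive.
Import Order.TTheory GRing.Theory Num.Theory numFieldTopology.Exports numFieldNormedType.Exports.
Local Open Scope classical_set_scope.
Local Open Scope ring_scope.

Record group_on (G : Type) := GroupOn {
  gmul : G -> G -> G;
  gone : G;
  ginv : G -> G;
  gmulA : forall a b c, gmul a (gmul b c) = gmul (gmul a b) c;
  gmul1 : forall a, gmul gone a = a;
  gmulV : forall a, gmul (ginv a) a = gone }.

Record metric_on (R : realType) (X : Type) := MetricOn {
  dist : X -> X -> R;
  dist_eq0 : forall x y, dist x y = 0 <-> x = y;
  dist_sym : forall x y, dist x y = dist y x;
  dist_tri : forall x y z, dist x z <= dist x y + dist y z }.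

Definition isometric_action (R : realType) (G X : Type) (g : group_on G)
    (m : metric_on R X) (act : G -> X -> X) : Prop :=
  (forall x, act (gone g) x = x) /\
  (forall a b x, act (gmul g a b) x = act a (act b x)) /\
  (forall a x y, dist m (act a x) (act a y) = dist m x y).

Definition ball_G (R : realType) (G X : Type) (m : metric_on R X)
    (act : G -> X -> X) (x : X) (r : R) : set G :=
  [set a | dist m x (act a x) <= r].

Definition proper_action (R : realType) (G X : Type) (m : metric_on R X)
    (act : G -> X -> X) : Prop :=
  forall x r, finite_set (ball_G m act x r).

Definition is_subgroup (G : Type) (g : group_on G) (H : set G) : Prop :=
  H (gone g) /\ (forall a b, H a -> H b -> H (gmul g a b)) /\
  (forall a, H a -> H (ginv g a)).

Definition lcoset (G : Type) (g : group_on G) (H : set G) (a : G) : set G :=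
  [set y | exists2 h, H h & y = gmul g a h].

Definition coset_image (G : Type) (g : group_on G) (H : set G) (A : set G)
    : set (set G) := lcoset g H @` A.

(* number of elements of a finite set (0 by convention for infinite sets) *)
Definition ncard (T : Type) (A : set T) : nat :=
  match pselect (finite_set A) with
  | left _ => xget 0%N [set n | A #= `I_n]%card
  | right _ => 0%N
  end.

Definition growth_rate (R : realType) (T : Type) (A : R -> set T) : \bar R :=
  limf_esup (fun r : R => ((ln (ncard (A r))%:R) / r)%:E) (pinfty_nbhs R).

Definition omega_G (R : realType) (G X : Type) (m : metric_on R X)
    (act : G -> X -> X) (o : X) : \bar R :=
  growth_rate (fun r => ball_G m act o r).

Definition omega_GH (R : realType) (G X : Type) (g : group_on G)
    (m : metric_on R X) (act : G -> X -> X) (H : set G) (o : X) : \bar R :=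
  growth_rate (fun r => coset_image g H (ball_G m act o r)).

From HB Require Import structures.
From mathcomp Require Import all_boot all_order all_algebra.
From mathcomp Require Import all_classical all_reals all_analysis.
From mathcomp Require Import lra.
Set Implicit Arguments. Unset Strict Implicit. Unset Printing Implicit Defensive.
Import Order.TTheory GRing.Theory Num.Theory numFieldTopology.Exports numFieldNormedType.Exports.
Local Open Scope classical_set_scope.
Local Open Scope ring_scope.

(* For every coset of the form phi(c) H fix such a c.  The map
   u |-> (phi(u) H, c^-1 u), with c the representative of phi(u) H, is
   injective on B_G(x,s); by (CQ2) its first component lies in
   L(B_G(x, s + theta)), and by (CQ1) and (CQ2) its second lies in the finite
   ball B_G(x, 3 theta).  Hence |B_G(x,s)| <= C |L(B_G(x, s + theta))|.
   Changing the base point only shifts radii by a constant, which does not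
   affect exponential growth rates, and the reverse inequality is clear since
   L(B) is an image of B. *)

Section Ncard.

Lemma ncardP (T : Type) (A : set T) : finite_set A -> (A #= `I_(ncard A))%card.
Proof.
move=> fA; rewrite /ncard; case: pselect => // _.
by case: fA => n An; apply: (@xgetPex nat 0%N [set n | (A #= `I_n)%card]); exists n.
Qed.

Lemma ncard_le (T U : Type) (A : set T) (B : set U) :
  finite_set B -> (A #<= B)%card -> (ncard A <= ncard B)%N.
Proof.
move=> fB AB; have fA := card_le_finite AB fB.
by rewrite -card_le_II -(card_le_eql (ncardP fA)) -(card_le_eqr (ncardP fB)).
Qed.

Lemma ncard_gt0 (T : Type) (A : set T) (a : T) :
  finite_set A -> A a -> (0 < ncard A)%N.
Proof.
move=> fA Aa; rewrite lt0n; apply/negP => /eqP A0.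
by have := ncardP fA; rewrite A0 II0 card_eq0 => /eqP A0'; rewrite A0' in Aa.
Qed.

Lemma ncard_fset (T : choiceType) (A : set T) :
  finite_set A -> ncard A = size (finmap.enum_fset (fset_set A)).
Proof. by move=> fA; apply/esym/card_fset_set/ncardP. Qed.

Lemma ncardX (U V : choiceType) (I : set U) (J : set V) :
  finite_set I -> finite_set J -> (ncard (I `*` J) <= ncard I * ncard J)%N.
Proof.
move=> fI fJ; have fIJ := finite_setX fI fJ.
rewrite !ncard_fset // -(size_allpairs pair).
apply: uniq_leq_size; first exact: finmap.fset_uniq.
move=> [u v]; rewrite in_fset_set // => /set_mem [/= Iu Jv].
by apply: allpairs_f; rewrite in_fset_set //; apply: mem_set.
Qed.

Lemma ncard_le_mul (T U V : choiceType) (A : set T) (I : set U) (J : set V)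
    (F1 : T -> U) (F2 : T -> V) :
  finite_set I -> finite_set J ->
  (forall a, A a -> I (F1 a) /\ J (F2 a)) ->
  (forall a b, A a -> A b -> F1 a = F1 b -> F2 a = F2 b -> a = b) ->
  (ncard A <= ncard I * ncard J)%N.
Proof.
move=> fI fJ FIJ Finj; apply: leq_trans (ncardX fI fJ).
apply: ncard_le; first exact: finite_setX.
have inj_F : ([set (F1 a, F2 a) | a in A] #= A)%card.
  by apply: inj_card_eq => a b /set_mem Aa /set_mem Ab [] /Finj; apply.
rewrite -(card_le_eql inj_F); apply: subset_card_le.
by move=> _ [a /FIJ [Ia Ja] <-].
Qed.

End Ncard.

Section GrowthRate.
Variable R : realType.
Local Open Scope ereal_scope.

Lemma limf_esup_pinfty_lt (h : R -> \bar R) (y : R) :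
  limf_esup h (pinfty_nbhs R) < y%:E -> exists M : R, forall r, (M < r)%R -> h r < y%:E.
Proof.
rewrite limf_esupE => /ereal_inf_lt [_ [V [M [_ MV]] <-]] supy.
exists M => r Mr; apply: le_lt_trans supy.
by apply: ereal_sup_ubound; exists r => //; apply: MV.
Qed.

Lemma limf_esup_pinfty_le (h : R -> \bar R) (N y : R) :
  (forall r, (N < r)%R -> h r <= y%:E) -> limf_esup h (pinfty_nbhs R) <= y%:E.
Proof.
move=> hy; rewrite limf_esupE; apply: le_trans (ereal_inf_lbound _) _.
  by exists [set r | (N < r)%R] => //; exists N; split => //; apply: num_real.
by apply: ge_ereal_sup => _ [r Nr <-]; apply: hy.
Qed.

Lemma lee_real_gt (a b : \bar R) :
  (forall y : R, b < y%:E -> a <= y%:E) -> a <= b.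
Proof.
case: b => [b | | ] ab; last 2 first.
- exact: leey.
- case: a ab => [a | | ] ab //.
  + by have := ab (a - 1)%R (ltNyr _); rewrite lee_fin => ?; exfalso; lra.
  + by have := ab 0%R (ltNyr _).
apply/lee_addgt0Pr => e e0; apply: ab; rewrite lte_fin; lra.
Qed.

(* Given [y > limsup g(r)/r] and [e > 0], once [r] is large enough that
   [g(r + k) < y (r + k)] and [|c + y k| < r e], we get [f(r)/r < y + e]. *)
Lemma limf_esup_div_shift (f g : R -> R) (c k : R) :
  (0 <= k)%R -> (forall r, 0 < r -> f r <= c + g (r + k))%R ->
  limf_esup (fun r => (f r / r)%:E) (pinfty_nbhs R) <=
  limf_esup (fun r => (g r / r)%:E) (pinfty_nbhs R).
Proof.
move=> k0 fg; apply: lee_real_gt => y /limf_esup_pinfty_lt [M gy].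
apply/lee_addgt0Pr => e e0; rewrite -EFinD.
apply: (limf_esup_pinfty_le (N := Num.max M 0 + `|c + y * k| / e)%R) => r Nr.
have M0 : (M <= Num.max M 0 /\ 0 <= Num.max M 0)%R.
  by rewrite !le_max !lexx orbT.
have ce0 : (0 <= `|c + y * k| / e)%R by rewrite divr_ge0 // ltW.
have r0 : (0 < r)%R by lra.
have /gy : (M < r + k)%R by lra.
rewrite lte_fin ltr_pdivrMr; last by lra.
have : (`|c + y * k| < r * e)%R by rewrite -ltr_pdivrMr //; lra.
have := ler_norm (c + y * k)%R; have := fg r r0.
rewrite lee_fin ler_pdivrMr //; nra.
Qed.

Lemma growth_rate_le (T U : Type) (A : R -> set T) (B : R -> set U) (C : nat) (k : R) :
  (0 <= k)%R ->
  (forall r, (0 < r)%R -> (0 < ncard (A r))%N /\ (0 < ncard (B (r + k)%R))%N) ->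
  (forall r, (0 < r)%R -> (ncard (A r) <= C * ncard (B (r + k)%R))%N) ->
  growth_rate A <= growth_rate B.
Proof.
move=> k0 pos AB; apply: (limf_esup_div_shift (c := ln C%:R) k0) => r r0.
have [A0 B0] := pos r r0; have AB_r := AB r r0.
have C0 : (0 < C)%N.
  by rewrite lt0n; apply: contraTneq AB_r => ->; rewrite mul0n -ltnNge.
have CB0 : (0 < C * ncard (B (r + k)%R))%N by rewrite muln_gt0 C0.
by rewrite -lnM ?posrE ?ltr0n // -natrM ler_ln ?posrE ?ltr0n // ler_nat.
Qed.

End GrowthRate.

Section Group.
Variables (G : Type) (g : group_on G).

Lemma gmulVr (a : G) : gmul g a (ginv g a) = gone g.
Proof.
have aVa : gmul g (ginv g a) (gmul g a (ginv g a)) = ginv g a.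
  by rewrite gmulA gmulV gmul1.
by rewrite -[LHS](gmul1 g) -(gmulV g (ginv g a)) -gmulA aVa gmulV.
Qed.

Lemma gmulKV (a u : G) : gmul g a (gmul g (ginv g a) u) = u.
Proof. by rewrite gmulA gmulVr gmul1. Qed.

End Group.

Lemma dist_ge0 (R : realType) (X : Type) (m : metric_on R X) (p q : X) :
  0 <= dist m p q.
Proof.
have := dist_tri m p q p; rewrite (dist_sym m q p).
by have /(dist_eq0 m) -> : p = p by []; lra.
Qed.

Section IsometricAction.
Variables (R : realType) (G X : Type) (g : group_on G) (m : metric_on R X).
Variable act : G -> X -> X.
Hypothesis act_isom : isometric_action g m act.

Lemma dist_act_invl (a u : G) (y : X) :
  dist m y (act (gmul g (ginv g a) u) y) = dist m (act a y) (act u y).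
Proof.
have [act1 [actM act_dist]] := act_isom.
by rewrite -(act_dist a) actM -actM gmulVr act1.
Qed.

Lemma ball_G_shift (p q : X) (r r' : R) :
  r + 2 * dist m p q <= r' -> ball_G m act p r `<=` ball_G m act q r'.
Proof.
have [_ [_ act_dist]] := act_isom.
move=> rr' u; rewrite /ball_G /= => pu.
have := dist_tri m q p (act u q); have := dist_tri m p (act u p) (act u q).
by rewrite act_dist (dist_sym m q p); lra.
Qed.

Lemma ball_G1 (p : X) (r : R) : 0 <= r -> ball_G m act p r (gone g).
Proof.
have [act1 _] := act_isom.
by rewrite /ball_G /= act1; have /(dist_eq0 m) -> : p = p by [].
Qed.

Hypothesis act_proper : proper_action m act.

Lemma ncard_ball_G_gt0 (p : X) (r : R) :
  0 <= r -> (0 < ncard (ball_G m act p r))%N.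
Proof. by move=> r0; apply: ncard_gt0 (act_proper p r) (ball_G1 p r0). Qed.

Lemma ncard_coset_image_gt0 (H : set G) (p : X) (r : R) :
  0 <= r -> (0 < ncard (coset_image g H (ball_G m act p r)))%N.
Proof.
move=> r0; apply: ncard_gt0; first exact/finite_image/act_proper.
by exists (gone g); first exact: ball_G1.
Qed.

Lemma ncard_coset_image_le (H : set G) (p : X) (r : R) :
  (ncard (coset_image g H (ball_G m act p r)) <= ncard (ball_G m act p r))%N.
Proof. by apply: ncard_le (act_proper p r) _; apply: card_image_le. Qed.

Section QuasiTransversal.
Variables (H : set G) (phi : G -> G) (theta : R) (x : X).
Hypothesis CQ1 : forall u v, lcoset g H (phi u) = lcoset g H (phi v) ->
  dist m (act (phi u) x) (act (phi v) x) <= theta.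
Hypothesis CQ2 : forall u, dist m (act u x) (act (phi u) x) <= theta.

Lemma ncard_ball_G_le_cosets (s : R) :
  (ncard (ball_G m act x s) <=
   ncard (coset_image g H (ball_G m act x (s + theta))) *
   ncard (ball_G m act x (3 * theta)))%N.
Proof.
pose L u := lcoset g H (phi u).
pose rep c : G := xget (gone g : {classic G}) [set y | L y = c].
have repP u : L (rep (L u)) = L u.
  by apply: (@xgetPex _ (gone g : {classic G}) [set y | L y = L u]); exists u.
apply: (@ncard_le_mul {classic G} {classic (set G)} {classic G} _ _ _
  L (fun u => gmul g (ginv g (rep (L u))) u)).
- exact/finite_image/act_proper.
- exact: act_proper.
- move=> u Au; split.
    exists (phi u) => //; move: Au; rewrite /ball_G /= => Au.
    by have := dist_tri m x (act u x) (act (phi u) x); have := CQ2 u; lra.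
  rewrite /ball_G /= dist_act_invl.
  have := dist_tri m (act (rep (L u)) x) (act (phi (rep (L u))) x) (act u x).
  have := dist_tri m (act (phi (rep (L u))) x) (act (phi u) x) (act u x).
  have := CQ1 (repP u); have := CQ2 (rep (L u)); have := CQ2 u.
  by rewrite (dist_sym m (act u x)); lra.
- move=> u v _ _ /= Luv; rewrite Luv => eq_rep.
  by rewrite -(gmulKV g (rep (L v)) u) eq_rep gmulKV.
Qed.

Lemma ncard_ball_G_le_cosets_at (o : X) (r : R) :
  (ncard (ball_G m act o r) <=
   ncard (coset_image g H
     (ball_G m act o (r + (2 * dist m o x + theta + 2 * dist m x o)))) *
   ncard (ball_G m act x (3 * theta)))%N.
Proof.
apply: (leq_trans (n := ncard (ball_G m act x (r + 2 * dist m o x)))).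
  by apply/ncard_le/subset_card_le/ball_G_shift; first exact: act_proper.
apply: leq_trans (ncard_ball_G_le_cosets _) _; rewrite leq_mul2r; apply/orP; right.
apply/ncard_le/subset_card_le/image_subset/ball_G_shift; first exact/finite_image/act_proper.
lra.
Qed.

End QuasiTransversal.
End IsometricAction.

Theorem mainTheorem7 (R : realType) (G X : Type) (g : group_on G)
    (m : metric_on R X) (act : G -> X -> X)
    (Hact : isometric_action g m act) (Hprop : proper_action m act)
    (H : set G) (HH : is_subgroup g H)
    (phi : G -> G) (theta : R) (x : X) (Htheta : 0 <= theta)
    (CQ1 : forall u v, lcoset g H (phi u) = lcoset g H (phi v) ->
             dist m (act (phi u) x) (act (phi v) x) <= theta)
    (CQ2 : forall u, dist m (act u x) (act (phi u) x) <= theta) :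
  forall o : X, omega_G m act o = omega_GH g m act H o.
Proof.
move=> o; set k := 2 * dist m o x + theta + 2 * dist m x o.
have k0 : 0 <= k by rewrite /k; have := dist_ge0 m o x; have := dist_ge0 m x o; lra.
apply/eqP; rewrite eq_le; apply/andP; split.
- apply: (growth_rate_le (C := ncard (ball_G m act x (3 * theta))) k0) => r r0.
    by split; [apply: (ncard_ball_G_gt0 Hact) | apply: (ncard_coset_image_gt0 Hact)];
      rewrite //; lra.
  by rewrite mulnC; apply: (ncard_ball_G_le_cosets_at Hact Hprop CQ1 CQ2).
- apply: (growth_rate_le (C := 1%N) (lexx 0)) => r r0.
    by split; [apply: (ncard_coset_image_gt0 Hact) | apply: (ncard_ball_G_gt0 Hact)];
      rewrite // ?addr0; lra.
  by rewrite mul1n addr0; apply: (ncard_coset_image_le g Hprop).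
Qed.
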